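(* Let $ABCD$ be a convex quadrilateral. Let $\alpha_1,\alpha_2,\alpha_3,\alpha_4$ be the four angles that the diagonal $AC$ makes with the sides, namely $\angle BAC,\angle BCA,\angle DAC,\angle DCA$. Let $\beta_1,\beta_2,\beta_3,\beta_4$ be the four angles that the diagonal $BD$ makes with the sides, namely $\angle ABD,\angle ADB,\angle CBD,\angle CDB$. Suppose $0<\varepsilon<\frac{\pi}{12}$ and $|\alpha_i-\frac{\pi}{4}|<\varepsilon$ for every $i$. Then $|\beta_j-\frac{\pi}{4}|<3\varepsilon$ for every $j$. *)

From Stdlib Require Import Reals.
Open Scope R_scope.

Definition point := (R * R)%type.

Definition cross (P Q S : point) : R :=
  (fst Q - fst P) * (snd S - snd P) - (snd Q - snd P) * (fst S - fst P).

Definition dot (P Q S : point) : R :=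
  (fst Q - fst P) * (fst S - fst P) + (snd Q - snd P) * (snd S - snd P).

Definition dist (P Q : point) : R :=
  sqrt ((fst Q - fst P) ^ 2 + (snd Q - snd P) ^ 2).

Definition angle (Q P S : point) : R :=
  acos (dot P Q S / (dist P Q * dist P S)).

(* ABCD is a (non-degenerate) convex quadrilateral with vertices in this
   cyclic order: all four turns A->B->C, B->C->D, C->D->A, D->A->B have the
   same strict orientation. *)
Definition convex_quad (A B C D : point) : Prop :=
  (0 < cross A B C /\ 0 < cross B C D /\ 0 < cross C D A /\ 0 < cross D A B) \/
  (cross A B C < 0 /\ cross B C D < 0 /\ cross C D A < 0 /\ cross D A B < 0).

(* Measure directions at B from the normal to the diagonal AC: the side BA
   makes the angle theta = PI/2 - angle BAC with it and the diagonal BD an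
   angle delta with tan delta = tilt A C B D, so angle ABD = theta - delta.
   Each cot alpha_i lies in (tan (PI/4 - eps), tan (PI/4 + eps)), an interval
   of length 2 tan (2 eps).  The feet of B and of D on AC both split AC, so
   tan delta is a weighted mean of (cot alpha_1 - cot alpha_2)/2 and
   (cot alpha_4 - cot alpha_3)/2; hence |delta| < 2 eps and
   |angle ABD - PI/4| < eps + 2 eps.  The other angles follow by relabelling. *)
From Pilot Require Import Defs.
From Stdlib Require Import Reals Lra Psatz.
Open Scope R_scope.

Lemma atan_lt_reg (x y : R) : atan x < atan y -> x < y.
Proof.
  intros H; destruct (Rlt_or_le x y) as [|[Hyx|<-]]; auto.
  - apply atan_increasing in Hyx; lra.
  - lra.
Qed.

Lemma tan_bounds_of_Rabs_atan_sub (c a e : R) :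
  - (PI / 2) < a - e -> a + e < PI / 2 ->
  Rabs (atan c - a) < e -> tan (a - e) < c < tan (a + e).
Proof.
  intros h1 h2 h; apply Rabs_def2 in h.
  split; apply atan_lt_reg; rewrite atan_tan; lra.
Qed.

Lemma Rabs_atan_lt (k a : R) : 0 < a < PI / 2 -> Rabs k < tan a -> Rabs (atan k) < a.
Proof.
  intros ha hk; apply Rabs_def2 in hk; apply Rabs_def1.
  - rewrite <- (atan_tan a) by lra; apply atan_increasing; lra.
  - rewrite <- (atan_tan a) by lra; rewrite <- atan_opp; apply atan_increasing; lra.
Qed.

Lemma cos_neq0 (x : R) : - (PI / 2) < x < PI / 2 -> cos x <> 0.
Proof. intros hx; apply Rgt_not_eq, cos_gt_0; lra. Qed.

Lemma tan_PI4_add_sub (e : R) : 0 < e < PI / 8 ->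
  tan (PI / 4 + e) - tan (PI / 4 - e) = 2 * tan (2 * e).
Proof.
  intros he; pose proof PI_RGT_0.
  set (t := tan e).
  assert (Ht0 : 0 < t) by (apply atan_lt_reg; unfold t; rewrite atan_tan, atan_0; lra).
  assert (Ht1 : t < 1) by (apply atan_lt_reg; unfold t; rewrite atan_tan, atan_1; lra).
  rewrite tan_plus, tan_minus, tan_2a; try (apply cos_neq0; lra);
    rewrite ?tan_PI4; fold t; try nra.
  field; nra.
Qed.

Lemma Rabs_half_sub_lt_of_atan_near_PI4 (c c' e : R) : 0 < e < PI / 8 ->
  Rabs (atan c - PI / 4) < e -> Rabs (atan c' - PI / 4) < e ->
  Rabs ((c - c') / 2) < tan (2 * e).
Proof.
  intros he h h'; pose proof PI_RGT_0.
  apply tan_bounds_of_Rabs_atan_sub in h, h'; try lra.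
  pose proof (tan_PI4_add_sub e he).
  apply Rabs_def1; lra.
Qed.

Lemma atan_cot_sub (th de : R) :
  - (PI / 2) < th < PI / 2 -> - (PI / 2) < de < PI / 2 -> 0 < th - de < PI ->
  atan ((1 + tan th * tan de) / (tan th - tan de)) = PI / 2 - (th - de).
Proof.
  intros hth hde hg.
  assert (sg : 0 < sin (th - de)) by (apply sin_gt_0; lra).
  pose proof (cos_neq0 th hth); pose proof (cos_neq0 de hde).
  rewrite <- (atan_tan (PI / 2 - (th - de))) by lra.
  f_equal; unfold tan; rewrite sin_shift, cos_shift, cos_minus, sin_minus in *.
  field; repeat split; auto; lra.
Qed.

Lemma Rabs_sub_opp_sign (x y : R) : x * y < 0 -> Rabs (x - y) = Rabs x + Rabs y.
Proof. intros h; unfold Rabs; repeat destruct Rcase_abs; nra. Qed.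

Lemma Rabs_wavg_lt (x y a b T : R) : 0 < x -> 0 < y -> Rabs a < T -> Rabs b < T ->
  Rabs ((x * a + y * b) / (x + y)) < T.
Proof.
  intros hx hy ha hb; apply Rabs_def2 in ha, hb.
  set (q := (x * a + y * b) / (x + y)).
  assert (Hq : q * (x + y) = x * a + y * b) by (unfold q; field; lra).
  apply Rabs_def1; apply (Rmult_lt_reg_r (x + y)); try lra; rewrite Hq; nra.
Qed.

Definition cot_angle (Q P S : point) : R := dot P Q S / Rabs (cross P Q S).

(* tangent of the angle between BD and the normal to AC *)
Definition tilt (A C B D : point) : R :=
  (dot A B C - dot A D C) / (Rabs (cross A B C) + Rabs (cross A D C)).

Lemma cross_rev (P Q S : point) : cross S Q P = - cross P Q S.
Proof. unfold cross; ring. Qed.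

Lemma Rabs_cross_rev (P Q S : point) : Rabs (cross S Q P) = Rabs (cross P Q S).
Proof. now rewrite cross_rev, Rabs_Ropp. Qed.

Lemma dot_add_rev (P Q S : point) : dot P Q S + dot S Q P = dot P S S.
Proof. unfold dot; ring. Qed.

Lemma dot_self_ge0 (P S : point) : 0 <= dot P S S.
Proof. unfold dot; apply Rplus_le_le_0_compat; apply Rle_0_sqr. Qed.

(* Up to the factor |AC|, B and D have coordinates (dot A B C, cross A B C)
   and (dot A D C, cross A D C) in the frame of AC and its normal. *)
Lemma dot_diag_scaled (A B C D : point) :
  dot A C C * dot B A D =
  cross A B C * (cross A B C - cross A D C) + dot A B C * (dot A B C - dot A D C).
Proof. unfold dot, cross; ring. Qed.

Lemma cross_diag_scaled (A B C D : point) :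
  dot A C C * cross B A D = dot A B C * cross A D C - dot A D C * cross A B C.
Proof. unfold dot, cross; ring. Qed.

Lemma dist_mul_dist (P Q S : point) :
  Defs.dist P Q * Defs.dist P S = sqrt (cross P Q S ^ 2 + dot P Q S ^ 2).
Proof.
  unfold Defs.dist; rewrite <- sqrt_mult by (apply Rplus_le_le_0_compat; apply pow2_ge_0).
  f_equal; unfold cross, dot; ring.
Qed.

Lemma angle_cot (Q P S : point) :
  cross P Q S <> 0 -> angle Q P S = PI / 2 - atan (cot_angle Q P S).
Proof.
  intros Hc; unfold angle, cot_angle.
  set (a := Rabs (cross P Q S)); set (r := dot P Q S / a).
  assert (Ha : 0 < a) by now apply Rabs_pos_lt.
  assert (Hs : 0 < sqrt (1 + r²)) by (apply sqrt_lt_R0; unfold Rsqr; nra).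
  assert (Hd : Defs.dist P Q * Defs.dist P S = a * sqrt (1 + r²)).
  { rewrite dist_mul_dist, <- (sqrt_square a) at 1 by lra.
    rewrite <- sqrt_mult by (unfold Rsqr; nra).
    f_equal; unfold Rsqr.
    replace (a * a * (1 + r * r)) with (a * a + dot P Q S ^ 2) by (unfold r; field; lra).
    unfold a; rewrite <- Rabs_mult, Rabs_right by nra; ring. }
  rewrite Hd.
  replace (dot P Q S / (a * sqrt (1 + r²))) with (sin (atan r))
    by (rewrite sin_atan; unfold r at 1; field; split; lra).
  rewrite <- cos_shift; apply acos_cos.
  pose proof (atan_bound r); lra.
Qed.

Lemma Rabs_angle_sub_PI4 (Q P S : point) : cross P Q S <> 0 ->
  Rabs (angle Q P S - PI / 4) = Rabs (atan (cot_angle Q P S) - PI / 4).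
Proof.
  intros Hc; rewrite angle_cot by exact Hc.
  rewrite <- Rabs_Ropp; f_equal; lra.
Qed.

Lemma dot_pos_of_angle_lt_PI2 (Q P S : point) : cross P Q S <> 0 ->
  angle Q P S < PI / 2 -> 0 < dot P Q S.
Proof.
  intros Hc; rewrite angle_cot by exact Hc; intros Ha.
  assert (Hcot : 0 < cot_angle Q P S) by (apply atan_lt_reg; rewrite atan_0; lra).
  unfold cot_angle in Hcot; pose proof (Rabs_pos_lt _ Hc).
  replace (dot P Q S) with (dot P Q S / Rabs (cross P Q S) * Rabs (cross P Q S)) by (field; lra).
  nra.
Qed.

Section Diagonal.

Variables A B C D : point.
Let X := cross A B C.
Let X' := cross A D C.
Hypothesis opposite : X * X' < 0.

Lemma cross_ABC_neq0 : X <> 0.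
Proof. intro e; rewrite e in opposite; lra. Qed.

Lemma cross_ADC_neq0 : X' <> 0.
Proof. intro e; rewrite e in opposite; lra. Qed.

Lemma tilt_wavg :
  tilt A C B D =
  (Rabs X * ((cot_angle B A C - cot_angle B C A) / 2) +
   Rabs X' * ((cot_angle D C A - cot_angle D A C) / 2)) / (Rabs X + Rabs X').
Proof.
  pose proof (Rabs_pos_lt _ cross_ABC_neq0); pose proof (Rabs_pos_lt _ cross_ADC_neq0).
  unfold tilt, cot_angle; rewrite (Rabs_cross_rev A B C), (Rabs_cross_rev A D C); fold X X'.
  replace (Rabs X * _) with ((dot A B C - dot C B A) / 2) by (field; lra).
  replace (Rabs X' * _) with ((dot C D A - dot A D C) / 2) by (field; lra).
  pose proof (dot_add_rev A B C); pose proof (dot_add_rev A D C).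
  f_equal; lra.
Qed.

Lemma angle_ABD_cot : 0 < dot A B C -> 0 < dot A D C ->
  let c := cot_angle B A C in let k := tilt A C B D in
  angle A B D = PI / 2 - atan ((1 + c * k) / (c - k)).
Proof.
  intros hd1 hd3 c k.
  assert (hX : 0 < Rabs X) by exact (Rabs_pos_lt _ cross_ABC_neq0).
  assert (hX' : 0 < Rabs X') by exact (Rabs_pos_lt _ cross_ADC_neq0).
  assert (Eden : Rabs (dot A B C * X' - dot A D C * X) =
                 dot A B C * Rabs X' + dot A D C * Rabs X).
  { assert (0 < dot A B C * dot A D C) by nra.
    rewrite Rabs_sub_opp_sign, !Rabs_mult, !(Rabs_right (dot _ _ _)) by nra; ring. }
  assert (Enum : X * (X - X') = Rabs X * (Rabs X + Rabs X')).
  { rewrite <- Rabs_sub_opp_sign, <- Rabs_mult, Rabs_right by nra; ring. }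
  pose proof (cross_diag_scaled A B C D) as Ecross; fold X X' in Ecross.
  pose proof (dot_diag_scaled A B C D) as Edot; fold X X' in Edot.
  assert (hden : 0 < dot A B C * Rabs X' + dot A D C * Rabs X) by nra.
  assert (hL : 0 < dot A C C).
  { destruct (dot_self_ge0 A C) as [|hL0]; auto.
    rewrite <- hL0, Rmult_0_l in Ecross.
    apply (f_equal Rabs) in Ecross; rewrite Eden, Rabs_R0 in Ecross; lra. }
  assert (hcr : Rabs (cross B A D) * dot A C C = dot A B C * Rabs X' + dot A D C * Rabs X).
  { rewrite <- Eden, <- Ecross, Rabs_mult, (Rabs_right (dot A C C)) by lra; ring. }
  assert (hcr0 : cross B A D <> 0) by (intro e; rewrite e, Rabs_R0 in hcr; lra).
  assert (Ecot : cot_angle A B D =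
    (Rabs X * (Rabs X + Rabs X') + dot A B C * (dot A B C - dot A D C)) /
    (dot A B C * Rabs X' + dot A D C * Rabs X)).
  { unfold cot_angle; rewrite <- hcr, <- Enum, <- Edot.
    field; split; [lra | now apply Rabs_no_R0]. }
  rewrite angle_cot, Ecot by exact hcr0.
  do 2 f_equal; unfold c, k, cot_angle, tilt; fold X X'.
  field; repeat split; lra.
Qed.

Lemma angle_ABD_near_PI4 (eps : R) : 0 < eps -> eps < PI / 12 ->
  Rabs (angle B A C - PI / 4) < eps -> Rabs (angle B C A - PI / 4) < eps ->
  Rabs (angle D A C - PI / 4) < eps -> Rabs (angle D C A - PI / 4) < eps ->
  Rabs (angle A B D - PI / 4) < 3 * eps.
Proof.
  intros he0 he1 h1 h2 h3 h4; pose proof PI_RGT_0.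
  pose proof cross_ABC_neq0 as hX; pose proof cross_ADC_neq0 as hX'.
  assert (hXr : cross C B A <> 0) by (rewrite cross_rev; fold X; lra).
  assert (hXr' : cross C D A <> 0) by (rewrite cross_rev; fold X'; lra).
  assert (hd1 : 0 < dot A B C) by (apply dot_pos_of_angle_lt_PI2; auto; apply Rabs_def2 in h1; lra).
  assert (hd3 : 0 < dot A D C) by (apply dot_pos_of_angle_lt_PI2; auto; apply Rabs_def2 in h3; lra).
  rewrite Rabs_angle_sub_PI4 in h1, h2, h3, h4 by assumption.
  set (th := atan (cot_angle B A C)) in h1.
  set (de := atan (tilt A C B D)).
  assert (hde : Rabs de < 2 * eps).
  { apply Rabs_atan_lt; [lra|].
    rewrite tilt_wavg; apply Rabs_wavg_lt; try (apply Rabs_pos_lt; assumption);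
      apply Rabs_half_sub_lt_of_atan_near_PI4; auto; lra. }
  pose proof (atan_bound (cot_angle B A C)); pose proof (atan_bound (tilt A C B D)).
  apply Rabs_def2 in h1, hde.
  rewrite angle_ABD_cot by assumption.
  rewrite <- (tan_atan (cot_angle B A C)), <- (tan_atan (tilt A C B D)); fold th de.
  rewrite atan_cot_sub by (unfold th, de in *; lra).
  apply Rabs_def1; lra.
Qed.

End Diagonal.

Theorem lemma3p2p2 (A B C D : point) (eps : R) :
  convex_quad A B C D ->
  0 < eps -> eps < PI / 12 ->
  Rabs (angle B A C - PI / 4) < eps ->
  Rabs (angle B C A - PI / 4) < eps ->
  Rabs (angle D A C - PI / 4) < eps ->
  Rabs (angle D C A - PI / 4) < eps ->
  Rabs (angle A B D - PI / 4) < 3 * eps /\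
  Rabs (angle A D B - PI / 4) < 3 * eps /\
  Rabs (angle C B D - PI / 4) < 3 * eps /\
  Rabs (angle C D B - PI / 4) < 3 * eps.
Proof.
  intros hq he0 he1 h1 h2 h3 h4.
  assert (hopp : cross A B C * cross A D C < 0).
  { rewrite (cross_rev C D A).
    destruct hq as [[? [? [? ?]]] | [? [? [? ?]]]]; nra. }
  assert (hopp' : cross C B A * cross C D A < 0) by (rewrite (cross_rev A B C), (cross_rev A D C); lra).
  repeat split.
  - now apply (angle_ABD_near_PI4 A B C D).
  - apply (angle_ABD_near_PI4 A D C B); auto; lra.
  - now apply (angle_ABD_near_PI4 C B A D).
  - apply (angle_ABD_near_PI4 C D A B); auto; lra.
Qed.
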